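(* If $(h,a)$ is a solution of the DKP equations, i.e. $\partial_{t_j}h=\partial_x H^{(j)}$ and $\partial_{t_j}a=a\,(\tilde H^{(j)}-H^{(j)})$ for all $j\ge 1$, then $\tilde h=\sigma(h,a)=h+a_x/a$ is a solution of the KP equations: $\partial_{t_j}\tilde h=\partial_x\tilde H^{(j)}$ for all $j\ge1$. Moreover, assuming the KP currents satisfy $\partial_{t_j}H^{(k)}=\partial_{t_k}H^{(j)}$ along the KP flows, the DKP flows commute pairwise: $[\partial_{t_j},\partial_{t_k}]\,a=0$ (and $[\partial_{t_j},\partial_{t_k}]\,h=0$).
   Context: Let $x$ be a space variable; all coefficients below are functions of $x$, and a subscript $x$ denotes $\partial_x$. Let $M$ be the affine space of formal Laurent series $h(z)=z+\sum_{j\ge1}h_j z^{-j}$, $A$ the affine space of formal Laurent series $a(z)=z+\sum_{j\ge0}a_j z^{-j}$, and $N=M\times A$. The Faà di Bruno iterates of $h$ are $h^{(0)}=1$, $h^{(j+1)}=(\partial_x+h)h^{(j)}=\partial_x h^{(j)}+h\,h^{(j)}$ for $j\ge0$. For $j\ge0$, the KP current $H^{(j)}$ is the unique Laurent series of the form $H^{(j)}=h^{(j)}+\sum_{l=0}^{j-2}p^j_l[h]\,h^{(l)}$, with the $p^j_l[h]$ differential polynomials in the $h_i$ (independent of $z$), such that $H^{(j)}=z^j+O(z^{-1})$ as $z\to\infty$ (e.g. $H^{(0)}=1$, $H^{(1)}=h$, $H^{(2)}=h_x+h^2-2h_1$). The KP equations are $\partial_{t_j}h=\partial_x H^{(j)}$.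 The maps $\mu,\sigma:N\to M$ are $\mu(h,a)=h$ and $\sigma(h,a)=h+a_x/a$. The DKP equations on $N$ are $\partial_{t_j}h=\partial_xH^{(j)}$, $\partial_{t_j}a=a(\tilde H^{(j)}-H^{(j)})$, where $\tilde H^{(j)}$ denotes the current $H^{(j)}$ evaluated at $\tilde h=\sigma(h,a)$. *)

From HB Require Import structures.
From mathcomp Require Import all_boot all_order all_algebra.
From Stdlib Require Import ClassicalEpsilon.
Set Implicit Arguments. Unset Strict Implicit. Unset Printing Implicit Defensive.
Import Order.TTheory GRing.Theory Num.Theory.
Local Open Scope ring_scope.

Section LaurentSeries.
Variable K : comRingType.

(* mkLS d c represents  sum_(i >= 0) c i * z^(d - i)  *)
Record LS := mkLS { ldeg : nat; lc : nat -> K }.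

Definition coef (s : LS) (n : int) : K :=
  if n <= (ldeg s)%:Z then lc s (absz ((ldeg s)%:Z - n)) else 0.

Definition lseq (s t : LS) : Prop := forall n : int, coef s n = coef t n.

Definition lconst (c : K) : LS := mkLS 0 (fun i => if i == 0%N then c else 0).
Definition lzero : LS := lconst 0.
Definition lone : LS := lconst 1.

Definition ladd (s t : LS) : LS :=
  let D := maxn (ldeg s) (ldeg t) in
  mkLS D (fun i => coef s (D%:Z - i%:Z) + coef t (D%:Z - i%:Z)).
Definition lopp (s : LS) : LS := mkLS (ldeg s) (fun i => - lc s i).
Definition lsub (s t : LS) : LS := ladd s (lopp t).
Definition lmul (s t : LS) : LS :=
  mkLS (ldeg s + ldeg t) (fun i => \sum_(k < i.+1) lc s k * lc t (i - k)%N).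

Fixpoint lsumn (n : nat) (f : nat -> LS) : LS :=
  match n with 0%N => lzero | m.+1 => ladd (lsumn m f) (f m) end.

Definition lmap (d : K -> K) (s : LS) : LS := mkLS (ldeg s) (fun i => d (lc s i)).

(* quotient b / a : the series q with a * q = b (used for a monic a) *)
Definition ldiv (b a : LS) : LS :=
  epsilon (inhabits lzero) (fun q => lseq (lmul a q) b).

Definition inM (h : LS) : Prop :=
  coef h 1 = 1 /\ coef h 0 = 0 /\ forall n : int, 1 < n -> coef h n = 0.
Definition inA (a : LS) : Prop :=
  coef a 1 = 1 /\ forall n : int, 1 < n -> coef a n = 0.

Definition isDer (d : K -> K) : Prop :=
  (forall u v, d (u + v) = d u + d v) /\ (forall u v, d (u * v) = d u * v + u * d v).

Variable dx : K -> K.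

Fixpoint fdb (j : nat) (h : LS) : LS :=
  match j with
  | 0%N => lone
  | j'.+1 => ladd (lmap dx (fdb j' h)) (lmul h (fdb j' h))
  end.

Definition isCurrent (j : nat) (h H : LS) : Prop :=
  (exists p : nat -> K,
      lseq H (ladd (fdb j h) (lsumn (j.-1) (fun l => lmul (lconst (p l)) (fdb l h)))))
  /\ (forall n : int, 0 <= n -> coef H n = if n == j%:Z then 1 else 0).

Definition current (j : nat) (h : LS) : LS :=
  epsilon (inhabits lzero) (isCurrent j h).

Definition sigmaN (h a : LS) : LS := ladd h (ldiv (lmap dx a) a).

End LaurentSeries.

From HB Require Import structures.
From mathcomp Require Import all_boot all_order all_algebra zify.
From Stdlib Require Import ClassicalEpsilon Setoid Morphisms.
Set Implicit Arguments. Unset Strict Implicit. Unset Printing Implicit Defensive.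
Import Order.TTheory GRing.Theory Num.Theory.
Local Open Scope ring_scope.

(* Write T_j = H~^(j) - H^(j).  The a-equation says that d_j a / a = T_j;
   differentiating a * (a_x / a) = a_x shows that the logarithmic derivative
   a_x / a then moves by d_j (a_x / a) = (T_j)_x, which added to d_j h = (H^(j))_x
   gives d_j h~ = (H~^(j))_x.  As a is monic, a_x / a = O(z^-1) is obtained by
   long division and h~ stays in M, so the commutation hypothesis applies to both
   h and h~ and yields d_j T_k = d_k T_j.  Hence d_j d_k a = a (T_j T_k + d_j T_k)
   is symmetric in j and k, and likewise d_j d_k h = (d_j H^(k))_x. *)

Local Notation "s ≡ t" := (lseq s t) (at level 70).

Section SeriesAlgebra.
Variable K : comNzRingType.
Implicit Types (a b s t u : LS K) (d : K -> K).

#[global] Instance lseq_Equivalence : Equivalence (@lseq K).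
Proof.
by split=> [s n | s t H n | s t u H1 H2 n] //; rewrite ?H ?H1.
Qed.

Lemma coef_gt_ldeg s n : (ldeg s)%:Z < n -> coef s n = 0.
Proof. by rewrite /coef => H; case: ifP => //; lia. Qed.

Lemma coef_ldeg_sub s n (k : nat) : n = (ldeg s)%:Z - k%:Z -> coef s n = lc s k.
Proof. by move=> ->; rewrite /coef; case: ifP => [_|]; [congr (lc s _) |]; lia. Qed.

Lemma lseq_lc s t : ldeg s = ldeg t -> lc s =1 lc t -> s ≡ t.
Proof. by move=> Hd Hl n; rewrite /coef Hd Hl. Qed.

Lemma coef_lzero n : coef (lzero K) n = 0.
Proof. by rewrite /coef /=; case: ifP => //; case: (absz _). Qed.

Lemma coef_ladd s t n : coef (ladd s t) n = coef s n + coef t n.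
Proof.
rewrite {1}/coef /=; case: ifP => H.
  by congr (_ + _); congr (coef _ _); lia.
by rewrite !coef_gt_ldeg ?addr0 //; lia.
Qed.

Lemma coef_lopp s n : coef (lopp s) n = - coef s n.
Proof. by rewrite /coef /=; case: ifP => //; rewrite oppr0. Qed.

Lemma coef_lsub s t n : coef (lsub s t) n = coef s n - coef t n.
Proof. by rewrite /lsub coef_ladd coef_lopp. Qed.

Lemma coef_lmap d s n : d 0 = 0 -> coef (lmap d s) n = d (coef s n).
Proof. by move=> d0; rewrite /coef /=; case: ifP. Qed.

#[global] Instance ladd_Proper : Proper (@lseq K ==> @lseq K ==> @lseq K) (@ladd K).
Proof. by move=> s s' Hs t t' Ht n; rewrite !coef_ladd Hs Ht. Qed.

#[global] Instance lsub_Proper : Proper (@lseq K ==> @lseq K ==> @lseq K) (@lsub K).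
Proof. by move=> s s' Hs t t' Ht n; rewrite !coef_lsub Hs Ht. Qed.

Lemma laddI s t u : ladd s t ≡ ladd s u -> t ≡ u.
Proof. by move=> H n; apply: (@addrI _ (coef s n)); rewrite -!coef_ladd. Qed.

Lemma lsubKC s t : ladd s (lsub t s) ≡ t.
Proof. by move=> n; rewrite coef_ladd coef_lsub subrKC. Qed.

Lemma big_ord_trunc (G : nat -> K) (m N : nat) : (m <= N)%N ->
  (forall j, (m <= j)%N -> G j = 0) -> \sum_(j < N) G j = \sum_(j < m) G j.
Proof.
move=> HmN HG; rewrite (big_ord_widen _ _ HmN) [RHS]big_mkcond /=.
by apply: eq_bigr => i _; case: ifP => // /negbT; rewrite -leqNgt => /HG ->.
Qed.

Lemma coef_lmul s t n (N : nat) : (ldeg s)%:Z + (ldeg t)%:Z - n < N%:Z ->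
  coef (lmul s t) n =
    \sum_(k < N) coef s ((ldeg s)%:Z - k%:Z) * coef t (n - (ldeg s)%:Z + k%:Z).
Proof.
move=> HN; rewrite {1}/coef /=; case: ifP => Hn; last first.
  by rewrite big1 // => k _; rewrite (@coef_gt_ldeg t) ?mulr0 //; lia.
set i := absz _.
pose G k := coef s ((ldeg s)%:Z - k%:Z) * coef t (n - (ldeg s)%:Z + k%:Z).
rewrite (@big_ord_trunc G i.+1) => [|| j Hj]; last 2 first.
- lia.
- by rewrite /G (@coef_gt_ldeg t) ?mulr0 //; lia.
apply: eq_bigr => k _; have := ltn_ord k => Hk; rewrite /G.
by rewrite (@coef_ldeg_sub s _ k) // (@coef_ldeg_sub t _ (i - k)) //; lia.
Qed.

(* The first L coefficients of a product only involve the first L coefficients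
   of the factors, so commutativity and associativity of lmul are inherited
   from polynomials. *)
Definition ptrunc (L : nat) s : {poly K} := \poly_(k < L) lc s k.

Lemma lc_lmul_ptrunc (L : nat) s t k : (k < L)%N ->
  lc (lmul s t) k = (ptrunc L s * ptrunc L t)`_k.
Proof.
move=> Hk; rewrite coefM; apply: eq_bigr => j _; have := ltn_ord j => Hj.
by rewrite !coef_poly !ifT //; lia.
Qed.

Lemma lmulC s t : lmul s t ≡ lmul t s.
Proof.
apply: lseq_lc => [|i]; first by rewrite /= addnC.
by rewrite !(@lc_lmul_ptrunc i.+1) // mulrC.
Qed.

Lemma lmulA s t u : lmul (lmul s t) u ≡ lmul s (lmul t u).
Proof.
apply: lseq_lc => [|i]; first by rewrite /= addnA.
have ptruncM v w k : (k < i.+1)%N ->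
    (ptrunc i.+1 (lmul v w))`_k = (ptrunc i.+1 v * ptrunc i.+1 w)`_k.
  by move=> Hk; rewrite coef_poly Hk (@lc_lmul_ptrunc i.+1).
rewrite !(@lc_lmul_ptrunc i.+1) //.
transitivity ((ptrunc i.+1 s * ptrunc i.+1 t * ptrunc i.+1 u)`_i).
  by rewrite !coefM; apply: eq_bigr => j _; rewrite ptruncM.
rewrite -mulrA !coefM; apply: eq_bigr => j _; have := ltn_ord j => Hj.
by rewrite ptruncM //; lia.
Qed.

Lemma lmulr_lseq s t t' : t ≡ t' -> lmul s t ≡ lmul s t'.
Proof.
move=> H n; pose N := (absz ((ldeg s + ldeg t + ldeg t')%:Z - n)).+1.
by rewrite !(@coef_lmul _ _ n N); [apply: eq_bigr => k _; rewrite H | lia | lia].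
Qed.

#[global] Instance lmul_Proper : Proper (@lseq K ==> @lseq K ==> @lseq K) (@lmul K).
Proof.
move=> s s' Hs t t' Ht; rewrite (lmulr_lseq s Ht) lmulC (lmulr_lseq t' Hs).
exact: lmulC.
Qed.

Lemma isDer_0 d : isDer d -> d 0 = 0.
Proof. by case=> Hadd _; apply: (@addrI _ (d 0)); rewrite -Hadd !addr0. Qed.

Lemma isDer_1 d : isDer d -> d 1 = 0.
Proof.
case=> _ Hmul; apply: (@addrI _ (d 1)).
by have := Hmul 1 1; rewrite !mulr1 mul1r addr0 => <-.
Qed.

Lemma isDer_N d (x : K) : isDer d -> d (- x) = - d x.
Proof. by move=> Hd; apply: (@addrI _ (d x)); rewrite -Hd.1 !subrr isDer_0. Qed.

(* Not an instance, as it needs d 0 = 0: proofs put it in the context, where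
   typeclass search finds it, to rewrite under lmap d. *)
Lemma lmap_Proper d : d 0 = 0 -> Proper (@lseq K ==> @lseq K) (lmap d).
Proof. by move=> d0 s t H n; rewrite !coef_lmap // H. Qed.

Lemma lmapD d s t : isDer d -> lmap d (ladd s t) ≡ ladd (lmap d s) (lmap d t).
Proof. by move=> Hd n; rewrite coef_ladd !coef_lmap ?isDer_0 // coef_ladd Hd.1. Qed.

Lemma lmapB d s t : isDer d -> lmap d (lsub s t) ≡ lsub (lmap d s) (lmap d t).
Proof. by move=> Hd n; rewrite coef_lsub !coef_lmap ?isDer_0 // coef_lsub Hd.1 isDer_N. Qed.

Lemma lmapM d s t : isDer d ->
  lmap d (lmul s t) ≡ ladd (lmul (lmap d s) t) (lmul s (lmap d t)).
Proof.
move=> Hd n; rewrite coef_ladd coef_lmap ?isDer_0 // /coef /=.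
case: ifP => _; last by rewrite isDer_0 ?addr0.
rewrite (big_morph d Hd.1 (isDer_0 Hd)) -big_split /=.
by apply: eq_bigr => k _; rewrite Hd.2.
Qed.

Lemma lmap_comm d1 d2 s : (forall x, d1 (d2 x) = d2 (d1 x)) ->
  lmap d1 (lmap d2 s) ≡ lmap d2 (lmap d1 s).
Proof. by move=> H; apply: lseq_lc => // i; apply: H. Qed.

Lemma coef_lmul_inA a s n (N : nat) : inA a -> (ldeg s)%:Z - n < N%:Z ->
  coef (lmul a s) n = coef s (n - 1) + \sum_(j < N) coef a (- j%:Z) * coef s (n + j%:Z).
Proof.
case=> Ha1 Ha HN.
have Hda : (0 < ldeg a)%N.
  case: (posnP (ldeg a)) => // H0; move: Ha1; rewrite coef_gt_ldeg ?H0 //.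
  by move=> /esym/eqP; rewrite oner_eq0.
rewrite (@coef_lmul a s n (ldeg a + N)); last lia.
rewrite big_split_ord /=; congr (_ + _); last first.
  by apply: eq_bigr => j _; congr (coef a _ * coef s _); lia.
rewrite -[ldeg a]prednK // big_ord_recr /= big1 ?add0r => [|i _]; last first.
  by rewrite Ha ?mul0r //; have := ltn_ord i; lia.
by rewrite prednK // (_ : _ - _ = 1) ?Ha1 ?mul1r; [congr (coef s _) |]; lia.
Qed.

(* Multiplication by a monic series is injective: comparing coefficients from
   the top, the coefficient of z^n in a * s determines that of z^(n-1) in s. *)
Lemma inA_lmulI_ge a s t (m : int) : inA a ->
  (forall n, m < n -> coef (lmul a s) n = coef (lmul a t) n) ->
  forall n, m <= n -> coef s n = coef t n.
Proof.
move=> Ha H.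
suff Hk (k : nat) n : m <= n -> (maxn (ldeg s) (ldeg t))%:Z - n < k%:Z ->
    coef s n = coef t n.
  by move=> n Hn; apply: (Hk (absz ((maxn (ldeg s) (ldeg t))%:Z - n)).+1); lia.
elim: k n => [|k IH] n Hmn Hk; first by rewrite !coef_gt_ldeg //; lia.
have /H : m < n + 1 by lia.
rewrite !(@coef_lmul_inA a _ _ k.+1 Ha) ?addrK; [|lia..].
have -> : \sum_(j < k.+1) coef a (- j%:Z) * coef s (n + 1 + j%:Z) =
          \sum_(j < k.+1) coef a (- j%:Z) * coef t (n + 1 + j%:Z).
  by apply: eq_bigr => j _; rewrite IH //; lia.
by move/addIr.
Qed.

Lemma inA_lmulI a s t : inA a -> lmul a s ≡ lmul a t -> s ≡ t.
Proof. by move=> Ha H n; apply: (inA_lmulI_ge Ha (fun p _ => H p)). Qed.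

Lemma coef_lmap_inA_gt0 d a n : isDer d -> inA a -> 0 < n -> coef (lmap d a) n = 0.
Proof.
move=> Hd [Ha1 Ha] Hn; rewrite coef_lmap ?isDer_0 //.
case: (ltrP 1 n) => H1; first by rewrite Ha ?isDer_0.
by rewrite (_ : n = 1) ?Ha1 ?isDer_1 //; lia.
Qed.

Section Quotient.
Variables a b : LS K.

(* Long division by the monic series a: the coefficient of z^(-p-1) in the
   quotient is determined by the coefficients of z^0, ..., z^(-p) of b and the
   previously computed ones. *)
Definition qstep (l : seq K) (m : nat) : K :=
  if m is p.+1 then coef b (- p%:Z) - \sum_(j < p) coef a (- j%:Z) * nth 0 l (p - j)
  else 0.

Fixpoint qlist (m : nat) : seq K :=
  if m is m'.+1 then rcons (qlist m') (qstep (qlist m') m') else [::].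

Definition qcoef (m : nat) : K := nth 0 (qlist m.+1) m.

Lemma size_qlist m : size (qlist m) = m.
Proof. by elim: m => //= m IH; rewrite size_rcons IH. Qed.

Lemma nth_qlist m i : (i < m)%N -> nth 0 (qlist m) i = qcoef i.
Proof.
elim: m => // m IH Hi; case: (ltngtP i m) => [Him | | ->] //; last lia.
by rewrite /= nth_rcons size_qlist Him IH.
Qed.

Lemma qcoefS p :
  qcoef p.+1 = coef b (- p%:Z) - \sum_(j < p) coef a (- j%:Z) * qcoef (p - j).
Proof.
rewrite {1}/qcoef [qlist p.+2]/qlist -/(qlist p.+1) nth_rcons size_qlist ltnn eqxx.
by congr (_ - _); apply: eq_bigr => j _; rewrite nth_qlist //; lia.
Qed.

Definition lquot : LS K := mkLS 0 qcoef.

Lemma coef_lquot_ge0 n : 0 <= n -> coef lquot n = 0.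
Proof.
move=> Hn; case: (ltrP 0 n) => H; first by rewrite coef_gt_ldeg.
by rewrite (@coef_ldeg_sub _ _ 0) //=; lia.
Qed.

Lemma lmul_lquot : inA a -> (forall n, 0 < n -> coef b n = 0) -> lmul a lquot ≡ b.
Proof.
move=> Ha Hb n; rewrite (@coef_lmul_inA a lquot n (absz n).+1) //; last by rewrite /=; lia.
case: (ltrP 0 n) => Hn.
  rewrite Hb // coef_lquot_ge0 ?big1 ?addr0 //; last lia.
  by move=> j _; rewrite coef_lquot_ge0 ?mulr0 //; lia.
set m := absz n.
rewrite (@coef_ldeg_sub lquot _ m.+1) /=; last by rewrite /m; lia.
rewrite (@big_ord_trunc (fun j : nat => coef a (- j%:Z) * coef lquot (n + j%:Z)) m) //;
  last by move=> j Hj; rewrite coef_lquot_ge0 ?mulr0 //; rewrite /m in Hj; lia.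
rewrite qcoefS [X in _ + X](eq_bigr (fun j : 'I_m => coef a (- j%:Z) * qcoef (m - j))).
  by rewrite subrK; congr (coef b _); rewrite /m; lia.
move=> j _; rewrite (@coef_ldeg_sub lquot _ (m - j)) //=.
by have := ltn_ord j; rewrite /m; lia.
Qed.

End Quotient.

Lemma lmul_ldiv a b : inA a -> (forall n, 0 < n -> coef b n = 0) ->
  lmul a (ldiv b a) ≡ b.
Proof.
move=> Ha Hb; apply: (epsilon_spec (inhabits (lzero K)) (fun q : LS K => lmul a q ≡ b)).
by exists (lquot a b); apply: lmul_lquot.
Qed.

Lemma coef_ldiv_ge0 a b n : inA a -> (forall n, 0 < n -> coef b n = 0) ->
  0 <= n -> coef (ldiv b a) n = 0.
Proof.
move=> Ha Hb Hn; rewrite (@inA_lmulI_ge a _ (lzero K) 0 Ha) ?coef_lzero // => p Hp.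
rewrite lmul_ldiv // Hb // (@coef_lmul_inA a (lzero K) p 0) //; last by rewrite /=; lia.
by rewrite big_ord0 coef_lzero addr0.
Qed.

End SeriesAlgebra.

Section Flows.
Variables (K : comNzRingType) (dx : K -> K).
Hypothesis Hdx : isDer dx.
Implicit Types (a h H T : LS K) (d : K -> K).

Lemma coef_ldiv_lmap_ge0 a n : inA a -> 0 <= n -> coef (ldiv (lmap dx a) a) n = 0.
Proof. by move=> Ha; apply: coef_ldiv_ge0 => // m; apply: coef_lmap_inA_gt0. Qed.

(* If d a = a T then d (a_x / a) = T_x: differentiate a (a_x / a) = a_x by d,
   use d a_x = (d a)_x = (a T)_x and cancel the monic a. *)
Lemma lmap_logder d a T : isDer d -> (forall x, dx (d x) = d (dx x)) -> inA a ->
  lmap d a ≡ lmul a T -> lmap d (ldiv (lmap dx a) a) ≡ lmap dx T.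
Proof.
move=> Hd Hc Ha HT.
have dP := lmap_Proper (isDer_0 Hd); have dxP := lmap_Proper (isDer_0 Hdx).
set q := ldiv (lmap dx a) a.
have Hq : lmul a q ≡ lmap dx a by apply: lmul_ldiv => // n; apply: coef_lmap_inA_gt0.
have E : lmul (lmap d a) q ≡ lmul (lmap dx a) T.
  by rewrite HT lmulA (lmulC T) -lmulA Hq.
apply: (inA_lmulI Ha); apply: (@laddI _ (lmul (lmap dx a) T)).
transitivity (lmap d (lmul a q)); first by rewrite (lmapM _ _ Hd) E.
by rewrite Hq -(lmap_comm _ Hc) HT (lmapM _ _ Hdx).
Qed.

Lemma sigmaN_inM h a : inM h -> inA a -> inM (sigmaN dx h a).
Proof.
move=> [H1 [H0 Hgt]] Ha; have Hq := coef_ldiv_lmap_ge0 Ha.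
rewrite /inM /sigmaN !coef_ladd !Hq ?addr0 //; split=> //; split=> // n Hn.
by rewrite coef_ladd Hq ?Hgt ?addr0 //; lia.
Qed.

Lemma lmap_sigmaN d h a H H' : isDer d -> (forall x, dx (d x) = d (dx x)) -> inA a ->
  lmap d h ≡ lmap dx H -> lmap d a ≡ lmul a (lsub H' H) ->
  lmap d (sigmaN dx h a) ≡ lmap dx H'.
Proof.
move=> Hd Hc Ha Hh HaH; have dxP := lmap_Proper (isDer_0 Hdx).
by rewrite /sigmaN (lmapD _ _ Hd) Hh (lmap_logder Hd Hc Ha HaH) -(lmapD _ _ Hdx) lsubKC.
Qed.

Lemma lmap_comm_logder d d' a T T' : isDer d -> isDer d' ->
  lmap d a ≡ lmul a T -> lmap d' a ≡ lmul a T' -> lmap d T' ≡ lmap d' T ->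
  lmap d (lmap d' a) ≡ lmap d' (lmap d a).
Proof.
move=> Hd Hd' HT HT' HTT'.
have dP := lmap_Proper (isDer_0 Hd); have d'P := lmap_Proper (isDer_0 Hd').
rewrite HT HT' (lmapM _ _ Hd) (lmapM _ _ Hd') HT HT' HTT'.
by rewrite !lmulA (lmulC T).
Qed.

Lemma lmap_comm_conserved d d' h H H' :
  isDer d -> isDer d' ->
  (forall x, dx (d x) = d (dx x)) -> (forall x, dx (d' x) = d' (dx x)) ->
  lmap d h ≡ lmap dx H -> lmap d' h ≡ lmap dx H' -> lmap d H' ≡ lmap d' H ->
  lmap d (lmap d' h) ≡ lmap d' (lmap d h).
Proof.
move=> Hd Hd' Hc Hc' Hh Hh' HHH'; have dxP := lmap_Proper (isDer_0 Hdx).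
have dP := lmap_Proper (isDer_0 Hd); have d'P := lmap_Proper (isDer_0 Hd').
by rewrite Hh Hh' -(lmap_comm _ Hc) -(lmap_comm _ Hc') HHH'.
Qed.

End Flows.

Theorem mainTheorem1 (K : comRingType) (dx : K -> K) (dt : nat -> K -> K)
  (h a : LS K) :
  isDer dx ->
  (forall j, isDer (dt j)) ->
  (forall j u, dx (dt j u) = dt j (dx u)) ->
  inM h -> inA a ->
  (* (h, a) solves the DKP equations *)
  (forall j : nat, (1 <= j)%N ->
     lseq (lmap (dt j) h) (lmap dx (current dx j h))) ->
  (forall j : nat, (1 <= j)%N ->
     lseq (lmap (dt j) a)
          (lmul a (lsub (current dx j (sigmaN dx h a)) (current dx j h)))) ->
  (* sigma(h, a) solves KP *)
  (forall j : nat, (1 <= j)%N ->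
     lseq (lmap (dt j) (sigmaN dx h a)) (lmap dx (current dx j (sigmaN dx h a))))
  /\
  (* if the KP currents commute along the KP flows, the DKP flows commute *)
  ((forall (j k : nat) (g : LS K), (1 <= j)%N -> (1 <= k)%N -> inM g ->
      lseq (lmap (dt j) g) (lmap dx (current dx j g)) ->
      lseq (lmap (dt k) g) (lmap dx (current dx k g)) ->
      lseq (lmap (dt j) (current dx k g)) (lmap (dt k) (current dx j g))) ->
   forall j k : nat, (1 <= j)%N -> (1 <= k)%N ->
     lseq (lmap (dt j) (lmap (dt k) a)) (lmap (dt k) (lmap (dt j) a)) /\
     lseq (lmap (dt j) (lmap (dt k) h)) (lmap (dt k) (lmap (dt j) h))).
Proof.
move=> Hdx Hdt Hc HM HA Hh Ha.
have KPsigma j : (1 <= j)%N ->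
    lmap (dt j) (sigmaN dx h a) ≡ lmap dx (current dx j (sigmaN dx h a)).
  by move=> Hj; apply: lmap_sigmaN (Hh j Hj) (Ha j Hj).
split; first exact: KPsigma.
move=> Hcomm j k Hj Hk; split.
- apply: lmap_comm_logder (Ha j Hj) (Ha k Hk) _ => //.
  rewrite !lmapB // (Hcomm j k h) //; [|exact: Hh..].
  by rewrite (Hcomm j k (sigmaN dx h a)) //; [exact: sigmaN_inM | exact: KPsigma..].
- apply: lmap_comm_conserved (Hh j Hj) (Hh k Hk) _ => //.
  exact: Hcomm (Hh j Hj) (Hh k Hk).
Qed.
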